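(* For every $h\in\{1,\dots,H-1\}$ and $\pi\in\Pi$, the quantities in FORCE satisfy $$\|\bar d^\pi_h-d^\pi_h\|_1\le\|\bar d^\pi_{h-1}-d^\pi_{h-1}\|_1+4\mathsf d\max_{\pi'\in\Pi}\|\hat d^{\pi'}_{h-1}-\bar d^{\pi'}_{h-1}\|_1.$$
   Context: Setting: finite-horizon episodic MDP $(\mathcal X,\mathcal A,P,H)$, measurable $\mathcal X$, finite $\mathcal A$ with $K=|\mathcal A|$, $[H]=\{0,\dots,H-1\}$, known initial distribution $d_0$; $d^\pi_h$ density of $x_h$ under Markov policy $\pi$; $\Pi$ a finite class of Markov policies. Low-rank: $P_h(x'\mid x,a)=\langle\phi^*_h(x,a),\mu^*_h(x')\rangle$, $\phi^*_h,\mu^*_h\in\mathbb R^{\mathsf d}$, $\|\phi^*_h\|_\infty\le1$, $\int\|\mu^*_h\|_1\le B^\mu$; $\mu^*$ known. Notation: $a\wedge b=\min(a,b)$, $0/0:=0$, $(\mathbf P^\pi_hd)(x'):=\iint P_h(x'\mid x,a)\pi_h(a\mid x)d(x)\mathrm dx\,\mathrm da$. Barycentric spanner of a set $S$ of functions with $m$-dimensional span: $\{s_1,\dots,s_m\}\subseteq S$ with every element of $S$ a linear combination of them with coefficients in $[-1,1]$. Algorithm FORCE (input $\Pi,\mu^*,n_{\rm mle},n_{\rm reg}$, $n=n_{\rm mle}+n_{\rm reg}$): with $\mathcal F_h:=\{\langle\mu^*_{h-1},\theta\rangle\in\Delta(\mathcal X):\|\theta\|_\infty\le1\}$, $\mathcal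 W_h:=\{\langle\mu^*_{h-1},\theta^{\rm up}\rangle/\langle\mu^*_{h-1},\theta^{\rm down}\rangle\text{ with sup-norm}\le\mathsf dK\}$; $\hat d^\pi_0=\tilde d^\pi_0=d_0$; for $h=1,\dots,H$: (1) choose $\pi^{h-1,1},\dots,\pi^{h-1,\mathsf d}\in\Pi$ with $\{\tilde d^{\pi^{h-1,i}}_{h-1}\}$ a barycentric spanner of $\{\tilde d^\pi_{h-1}\}_{\pi\in\Pi}$, $\Pi^{\rm expl}_{h-1}$ this set; (2) collect $n$ tuples $(x_{h-1},a_{h-1},x_h)$ by rolling in with a uniformly random element of $\Pi^{\rm expl}_{h-1}$ and then a uniform action; (3) split the tuples into $n_{\rm mle}$ and $n_{\rm reg}$; $\hat d^D_{h-1}\in\arg\max_{\mathcal F_{h-1}}\sum\log f(x^{(i)}_{h-1})$, $\hat d^{D,\dagger}_{h-1}\in\arg\max_{\mathcal F_h}\sum\log f(x^{(i)}_h)$; for each $\pi$, $\hat w^\pi_h\in\arg\min_{w\in\mathcal W_h}\sum_{\rm reg}(w(x^{(i)}_h)-\tilde w^\pi(x^{(i)}_{h-1})K\pi_{h-1}(a^{(i)}_{h-1}\mid x^{(i)}_{h-1}))^2$, $\tilde w^\pi=(\hat d^\pi_{h-1}\wedge\mathsf d\hat d^D_{h-1})/\hat d^D_{h-1}$, and $\hat d^\pi_h:=\hat w^\pi_h\hat d^{D,\dagger}_{h-1}$; (4) $\tilde d^\pi_h:=\langle\mu^*_{h-1},\tilde\theta\rangle$ with $\tilde\theta\in\arg\min_{\theta}\|\langle\mu^*_{h-1},\theta\rangle-\hat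 d^\pi_h\|_1$. Clipped occupancy for this data: $d^D_{h}$ is the density of $x_h$ in the data $\mathcal D_h$ collected at iteration $h+1$, i.e. the uniform mixture $\frac1{|\Pi^{\rm expl}_h|}\sum_i d^{\pi^{h,i}}_h$; the data action policy is $\pi^D_h=\mathrm{unif}(\mathcal A)$; thresholds $C^{\mathbf x}_h=\mathsf d$, $C^{\mathbf a}_h=K$; $\bar\pi_h:=\pi_h\wedge K\pi^D_h$, $\bar d^\pi_0=d_0$, $\bar d^\pi_h:=\mathbf P^{\bar\pi}_{h-1}(\bar d^\pi_{h-1}\wedge\mathsf d\,d^D_{h-1})$. *)

From mathcomp Require Import all_boot all_order all_algebra.
From mathcomp Require Import all_classical all_reals all_analysis.
Set Implicit Arguments. Unset Strict Implicit. Unset Printing Implicit Defensive.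
Import Order.TTheory GRing.Theory Num.Theory.
Import numFieldNormedType.Exports.
Local Open Scope classical_set_scope.
Local Open Scope ring_scope.

(* Conventions.
   - States X : measurableType, densities are w.r.t. a reference measure lam ("dx").
   - Actions: a finite type A, K = #|A|.
   - Feature dimension dd ("d"); vectors in R^dd are functions 'I_dd -> R.
   - A Markov policy is  pi : nat -> X -> A -> R,  pi h x a = pi_h(a | x).
   - The finite policy class Pi is given by an index finType I and pol : I -> policy. *)

Definition policy (R : realType) (dX : measure_display) (X : measurableType dX)
  (A : finType) := nat -> X -> A -> R.

Definition L1dist (R : realType) (dX : measure_display) (X : measurableType dX)
  (lam : {measure set X -> \bar R}) (f g : X -> R) : \bar R :=
  (\int[lam]_x (`|f x - g x|)%:E)%E.

Definition is_density (R : realType) (dX : measure_display) (X : measurableType dX)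
  (lam : {measure set X -> \bar R}) (f : X -> R) : Prop :=
  measurable_fun setT f /\ (forall x, 0 <= f x) /\ ((\int[lam]_x (f x)%:E) = 1)%E.

Definition lowrank (R : realType) (X : Type) (dd : nat)
  (m : X -> 'I_dd -> R) (th : 'I_dd -> R) : X -> R :=
  fun x => \sum_j m x j * th j.

Definition Ptrans (R : realType) (X : Type) (A : Type) (dd : nat)
  (phi : nat -> X -> A -> 'I_dd -> R) (mu : nat -> X -> 'I_dd -> R)
  (h : nat) (x : X) (a : A) (x' : X) : R :=
  \sum_j phi h x a j * mu h x' j.

Definition Pop (R : realType) (dX : measure_display) (X : measurableType dX)
  (lam : {measure set X -> \bar R}) (A : finType) (dd : nat)
  (phi : nat -> X -> A -> 'I_dd -> R) (mu : nat -> X -> 'I_dd -> R)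
  (pi : policy R X A) (h : nat) (d : X -> R) : X -> R :=
  fun x' => \int[lam]_x (\sum_a Ptrans phi mu h x a x' * pi h x a * d x).

Fixpoint occ (R : realType) (dX : measure_display) (X : measurableType dX)
  (lam : {measure set X -> \bar R}) (A : finType) (dd : nat)
  (phi : nat -> X -> A -> 'I_dd -> R) (mu : nat -> X -> 'I_dd -> R)
  (d0 : X -> R) (pi : policy R X A) (h : nat) : X -> R :=
  match h with
  | 0 => d0
  | h'.+1 => Pop lam phi mu pi h' (occ lam phi mu d0 pi h')
  end.

Definition lowrank_MDP (R : realType) (dX : measure_display) (X : measurableType dX)
  (lam : {measure set X -> \bar R}) (A : finType) (dd : nat)
  (phi : nat -> X -> A -> 'I_dd -> R) (mu : nat -> X -> 'I_dd -> R)
  (Bmu : R) (d0 : X -> R) : Prop :=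
  [/\ (forall h a j, measurable_fun setT (fun x => phi h x a j)) /\
      (forall h j, measurable_fun setT (fun x => mu h x j)),
      forall h x a j, `|phi h x a j| <= 1,
      forall h, ((\int[lam]_x (\sum_j `|mu h x j|)%:E) <= Bmu%:E)%E,
      (forall h x a x', 0 <= Ptrans phi mu h x a x') /\
      (forall h x a, ((\int[lam]_x' (Ptrans phi mu h x a x')%:E) = 1)%E)
    & is_density lam d0].

Definition markov_policy (R : realType) (dX : measure_display) (X : measurableType dX)
  (A : finType) (pi : policy R X A) : Prop :=
  [/\ forall h x a, 0 <= pi h x a,
      forall h x, \sum_a pi h x a = 1
    & forall h a, measurable_fun setT (fun x => pi h x a)].

(* S : I -> (X -> R) is the family {tilde d^pi}_{pi in Pi};
   s : 'I_m -> I lists the chosen policies (repetitions allowed).  The set of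
   functions {S (s k)} is a barycentric spanner of {S i}: the distinct functions
   among them are linearly independent (so their number is the dimension of the
   span), and every S i is a linear combination of these distinct functions with
   coefficients in [-1,1] (coefficients are put on first occurrences only). *)
Definition bary_spanner (R : realType) (X : Type) (I : finType) (m : nat)
  (S : I -> X -> R) (s : 'I_m -> I) : Prop :=
  (forall i : I, exists c : 'I_m -> R,
      [/\ forall k, -1 <= c k <= 1,
          forall k k' : 'I_m, (k' < k)%N -> S (s k') = S (s k) -> c k = 0
        & S i = (fun x => \sum_k c k * S (s k) x)])
  /\
  (forall c : 'I_m -> R, (forall x, \sum_k c k * S (s k) x = 0) ->
     forall k, \sum_(k' | `[< S (s k') = S (s k) >]) c k' = 0).

Definition expl_set (I : finType) (dd : nat) (expl : nat -> 'I_dd -> I) (h : nat)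
  : {set I} := [set expl h k | k : 'I_dd].

Definition dData (R : realType) (dX : measure_display) (X : measurableType dX)
  (lam : {measure set X -> \bar R}) (A : finType) (dd : nat)
  (phi : nat -> X -> A -> 'I_dd -> R) (mu : nat -> X -> 'I_dd -> R)
  (d0 : X -> R) (I : finType) (pol : I -> policy R X A)
  (expl : nat -> 'I_dd -> I) (h : nat) : X -> R :=
  fun x => (#|expl_set expl h|%:R)^-1 *
           \sum_(p in expl_set expl h) occ lam phi mu d0 (pol p) h x.

(* bar pi_h = pi_h /\ K * pi^D_h with pi^D = unif(A) *)
Definition clip_pol (R : realType) (dX : measure_display) (X : measurableType dX)
  (A : finType) (pi : policy R X A) : policy R X A :=
  fun h x a => Num.min (pi h x a) (#|A|%:R * (#|A|%:R)^-1).

Fixpoint dbar (R : realType) (dX : measure_display) (X : measurableType dX)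
  (lam : {measure set X -> \bar R}) (A : finType) (dd : nat)
  (phi : nat -> X -> A -> 'I_dd -> R) (mu : nat -> X -> 'I_dd -> R)
  (d0 : X -> R) (I : finType) (pol : I -> policy R X A)
  (expl : nat -> 'I_dd -> I) (pi : policy R X A) (h : nat) : X -> R :=
  match h with
  | 0 => d0
  | h'.+1 => Pop lam phi mu (clip_pol pi) h'
      (fun x => Num.min (dbar lam phi mu d0 pol expl pi h' x)
                        (dd%:R * dData lam phi mu d0 pol expl h' x))
  end.

(* F_h = { <mu_{h-1}, theta> in Delta(X) : ||theta||_oo <= 1 };  F_0 := {d_0}
   (d_0 is known and hat d_0 = d_0). *)
Definition Fclass (R : realType) (dX : measure_display) (X : measurableType dX)
  (lam : {measure set X -> \bar R}) (dd : nat) (mu : nat -> X -> 'I_dd -> R)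
  (d0 : X -> R) (h : nat) : set (X -> R) :=
  match h with
  | 0 => [set d0]
  | h'.+1 => [set f | exists th : 'I_dd -> R,
               [/\ forall j, `|th j| <= 1, f = lowrank (mu h') th & is_density lam f]]
  end.

Definition Wclass (R : realType) (X : Type) (A : finType) (dd : nat)
  (mu : nat -> X -> 'I_dd -> R) (h : nat) : set (X -> R) :=
  [set w | exists thu thd : 'I_dd -> R,
     w = (fun x => lowrank (mu h.-1) thu x / lowrank (mu h.-1) thd x) /\
     forall x, `|w x| <= dd%:R * #|A|%:R].

Definition loglik (R : realType) (X : Type) (f : X -> R) (xs : seq X) : \bar R :=
  (\sum_(x <- xs) (if (0 < f x)%R then (ln (f x))%:E else -oo))%E.

(* One run of FORCE (input Pi = pol, mu, n_mle, n_reg), for arbitrary realized data.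
   Level indexing: Dmle h, Dreg h are the n_mle / n_reg tuples (x_h, a_h, x_{h+1})
   collected at iteration h+1; expl h k = pi^{h,k}; hatdD h = hat d^D_h,
   hatdDdag h = hat d^{D,dagger}_h; hatw h p = hat w^p_h; hatd h p = hat d^p_h;
   tild h p = tilde d^p_h. *)
Definition FORCE_run (R : realType) (dX : measure_display) (X : measurableType dX)
  (lam : {measure set X -> \bar R}) (A : finType) (I : finType) (H dd : nat)
  (mu : nat -> X -> 'I_dd -> R) (d0 : X -> R) (pol : I -> policy R X A)
  (nmle nreg : nat) (Dmle Dreg : nat -> seq ((X * A) * X))
  (expl : nat -> 'I_dd -> I) (hatd tild : nat -> I -> X -> R)
  (hatdD hatdDdag : nat -> X -> R) (hatw : nat -> I -> X -> R) : Prop :=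
  [/\
      (forall p, hatd 0 p = d0 /\ tild 0 p = d0) /\
      (forall h, (h < H)%N -> bary_spanner (fun p => tild h p) (expl h)),
      forall h, (h < H)%N -> size (Dmle h) = nmle /\ size (Dreg h) = nreg,
      forall h, (h < H)%N ->
        (Fclass lam mu d0 h (hatdD h) /\
         forall f, Fclass lam mu d0 h f ->
           (loglik f [seq t.1.1 | t <- Dmle h]
              <= loglik (hatdD h) [seq t.1.1 | t <- Dmle h])%E) /\
        (Fclass lam mu d0 h.+1 (hatdDdag h) /\
         forall f, Fclass lam mu d0 h.+1 f ->
           (loglik f [seq t.2 | t <- Dmle h]
              <= loglik (hatdDdag h) [seq t.2 | t <- Dmle h])%E),
      forall h p, (h < H)%N ->
        let tw := fun x => Num.min (hatd h p x) (dd%:R * hatdD h x) / hatdD h x in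
        let loss := fun w : X -> R =>
          \sum_(t <- Dreg h) (w t.2 - tw t.1.1 * #|A|%:R * pol p h t.1.1 t.1.2) ^+ 2 in
        [/\ Wclass A mu h.+1 (hatw h.+1 p),
            forall w, Wclass A mu h.+1 w -> loss (hatw h.+1 p) <= loss w
          & hatd h.+1 p = (fun x => hatw h.+1 p x * hatdDdag h x)]
    &
      forall h p, (h < H)%N ->
        exists th : 'I_dd -> R,
          tild h.+1 p = lowrank (mu h) th /\
          forall th' : 'I_dd -> R,
            (L1dist lam (lowrank (mu h) th) (hatd h.+1 p)
               <= L1dist lam (lowrank (mu h) th') (hatd h.+1 p))%E].

(* Let g := min (dbar_(h-1), d d^D_(h-1)).  The data policy is uniform, so action
   clipping is vacuous and dbar_h = P g; the transition operator P is an L1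
   contraction, hence
     |dbar_h - d_h|_1 <= |g - d_(h-1)|_1 <= |dbar_(h-1) - d_(h-1)|_1 + int (dbar_(h-1) - g).
   The clipping loss is bounded pointwise through the barycentric spanner of the
   estimates tilde d_(h-1): the coefficients lie in [-1,1] and sit on at most d
   distinct exploration policies, so tilde d^pi is at most the sum of their dbar,
   which is at most the sum of their occupancies, i.e. at most d d^D, plus the
   errors |tilde d - dbar| of the spanner elements.  Finally tilde d is an L1
   projection of hat d onto the span of mu_(h-2), which contains dbar, so
   |tilde d - dbar|_1 <= 2 |hat d - dbar|_1; the d + 1 error terms give
   2 (d + 1) <= 4 d. *)

From HB Require Import structures.
From mathcomp Require Import all_boot all_order all_algebra.
From mathcomp Require Import all_classical all_reals all_analysis.
From mathcomp Require Import measurable_realfun ring lra.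
Set Implicit Arguments. Unset Strict Implicit. Unset Printing Implicit Defensive.
Import Order.TTheory GRing.Theory Num.Theory.
Local Open Scope classical_set_scope.
Local Open Scope ring_scope.

Lemma measurable_inv (R : realType) : measurable_fun setT (@GRing.inv R).
Proof.
have -> : [set: R] = [set x | x != 0] `|` [set 0].
  by apply/seteqP; split => x //= _; case: (eqVneq x 0); [right|left].
apply/measurable_funU => //.
  by apply: open_measurable; exact: open_neq.
split; last exact: measurable_fun_set1.
apply: open_continuous_measurable_fun; first exact: open_neq.
by move=> x; rewrite inE => x0; exact: inv_continuous.
Qed.

Lemma measurable_funV (R : realType) (dX : measure_display) (X : measurableType dX)
  (f : X -> R) : measurable_fun setT f -> measurable_fun setT (fun x => (f x)^-1).
Proof. exact: measurableT_comp (@measurable_inv R). Qed.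

Lemma measurable_lowrank (R : realType) (dX : measure_display) (X : measurableType dX)
  (dd : nat) (m : X -> 'I_dd -> R) (th : 'I_dd -> R) :
  (forall j, measurable_fun setT (m^~ j)) -> measurable_fun setT (lowrank m th).
Proof. by move=> mm; apply: measurable_sum => j; exact: measurable_funM. Qed.

Section real_integrable.
Context (R : realType) (dX : measure_display) (X : measurableType dX)
  (lam : {measure set X -> \bar R}).
Implicit Types u v : X -> R.

Definition rintegrable u := lam.-integrable setT (EFin \o u).

Lemma rintegrable_measurable u : rintegrable u -> measurable_fun setT u.
Proof. by move=> /measurable_int /measurable_EFinP. Qed.

Lemma rintegrable_le u v : measurable_fun setT u -> (forall x, `|u x| <= v x) ->
  rintegrable v -> rintegrable u.
Proof.
move=> mu uv iv; apply: le_integrable iv => //; first exact/measurable_EFinP.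
by move=> x _ /=; rewrite lee_fin (le_trans (uv x)) ?ler_norm.
Qed.

Lemma rintegrable_norm u : rintegrable u -> rintegrable (fun x => `|u x|).
Proof. by move=> iu; apply: eq_integrable (integrable_norm iu). Qed.

Lemma rintegrableD u v : rintegrable u -> rintegrable v -> rintegrable (u \+ v).
Proof. by move=> iu iv; apply: eq_integrable (integrableD measurableT iu iv). Qed.

Lemma rintegrableB u v : rintegrable u -> rintegrable v -> rintegrable (u \- v).
Proof. by move=> iu iv; apply: eq_integrable (integrableB measurableT iu iv). Qed.

Lemma rintegrableZ (k : R) u : rintegrable u -> rintegrable (fun x => k * u x).
Proof. by move=> iu; apply: eq_integrable (integrableZl measurableT k iu). Qed.

Lemma rintegrable_sum (I : Type) (s : seq I) (P : pred I) (F : I -> X -> R) :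
  (forall i, rintegrable (F i)) -> rintegrable (fun x => \sum_(i <- s | P i) F i x).
Proof.
move=> iF; have := integrable_sum measurableT s (fun i _ => iF i) (P := P).
by apply: eq_integrable => // x _; rewrite /= sumEFin.
Qed.

Lemma rintegrable_min u v : rintegrable u -> rintegrable v ->
  rintegrable (fun x => Num.min (u x) (v x)).
Proof.
move=> iu iv; apply: (@rintegrable_le _ (fun x => `|u x| + `|v x|)).
- by apply: measurable_minr; exact: rintegrable_measurable.
- by move=> x; rewrite /Num.min; case: ifP => _; rewrite ?lerDl ?lerDr.
- by apply: rintegrableD; exact: rintegrable_norm.
Qed.

Lemma Rintegral_sum (I : Type) (s : seq I) (F : I -> X -> R) :
  (forall i, rintegrable (F i)) ->
  \int[lam]_x (\sum_(i <- s) F i x) = \sum_(i <- s) \int[lam]_x F i x.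
Proof.
move=> iF; elim: s => [|i s ih].
  by under eq_Rintegral do rewrite big_nil; rewrite Rintegral_cst // mul0r big_nil.
under eq_Rintegral do rewrite big_cons.
rewrite (RintegralD measurableT (iF i)); first by rewrite ih big_cons.
exact: rintegrable_sum.
Qed.

End real_integrable.

Section L1dist.
Context (R : realType) (dX : measure_display) (X : measurableType dX)
  (lam : {measure set X -> \bar R}).
Implicit Types f g u t : X -> R.
Local Open Scope ereal_scope.

Lemma L1dist_ge0 f g : 0 <= L1dist lam f g.
Proof. by apply: integral_ge0 => x _; rewrite lee_fin. Qed.

Lemma L1distC f g : L1dist lam f g = L1dist lam g f.
Proof. by apply: eq_integral => x _; rewrite distrC. Qed.

Lemma L1distxx f : L1dist lam f f = 0.
Proof. by rewrite /L1dist; under eq_integral do rewrite subrr normr0; exact: integral0. Qed.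

Lemma measurable_L1_integrand f g : measurable_fun setT f -> measurable_fun setT g ->
  measurable_fun setT (fun x => (`|f x - g x|)%:E).
Proof.
by move=> mf mg; apply/measurable_EFinP/measurableT_comp => //; exact: measurable_funB.
Qed.

Lemma L1dist_triangle f g u :
  measurable_fun setT f -> measurable_fun setT g -> measurable_fun setT u ->
  L1dist lam f u <= L1dist lam f g + L1dist lam g u.
Proof.
move=> mf mg mu; rewrite /L1dist -ge0_integralD //;
  try exact: measurable_L1_integrand.
apply: ge0_le_integral => //; first exact: measurable_L1_integrand.
  by apply: emeasurable_funD; exact: measurable_L1_integrand.
by move=> x _; rewrite -EFinD lee_fin -(subrKA (g x)) ler_normD.
Qed.

Lemma L1dist_proj_le (S : set (X -> R)) t u f :
  measurable_fun setT t -> measurable_fun setT u -> measurable_fun setT f ->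
  (forall g, S g -> L1dist lam t u <= L1dist lam g u) -> S f ->
  L1dist lam t f <= L1dist lam u f + L1dist lam u f.
Proof.
move=> mt mu mf t_opt Sf; apply: le_trans (L1dist_triangle mt mu mf) _.
by apply: leeD2r; rewrite (L1distC u); exact: t_opt.
Qed.

Lemma L1dist_le_sub f g u :
  measurable_fun setT f -> measurable_fun setT g -> measurable_fun setT u ->
  (forall x, (g x <= f x)%R) ->
  L1dist lam g u <= L1dist lam f u + \int[lam]_x (f x - g x)%:E.
Proof.
move=> mf mg mu gf; have mfg : measurable_fun setT (fun x => (f x - g x)%:E).
  exact/measurable_EFinP/measurable_funB.
rewrite /L1dist -ge0_integralD //; first last.
- by move=> x _; rewrite lee_fin subr_ge0.
- exact: measurable_L1_integrand.
apply: ge0_le_integral => //; first exact: measurable_L1_integrand.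
  by apply: emeasurable_funD => //; exact: measurable_L1_integrand.
move=> x _; rewrite -EFinD lee_fin.
have := ler_normD (g x - f x)%R (f x - u x)%R.
by rewrite (ler0_norm (_ : g x - f x <= 0)%R) ?subr_le0 // subrKA; lra.
Qed.

End L1dist.

Section tonelli.
Context (R : realType) (dX : measure_display) (X : measurableType dX)
  (lam : {measure set X -> \bar R}) (lam_sf : sigma_finite setT lam).

(* [fubini_tonelli] needs a sigma-finite measure structure, which [lam] only
   has propositionally. *)
Let lam' : set X -> \bar R := lam.
HB.instance Definition _ := Measure.on lam'.
HB.instance Definition _ := @Measure_isSigmaFinite.Build _ _ _ lam' lam_sf.

Lemma ge0_integral_swap (f : X * X -> \bar R) : measurable_fun setT f ->
  (forall z, 0 <= f z)%E ->
  (\int[lam]_x \int[lam]_y f (x, y) = \int[lam]_y \int[lam]_x f (x, y))%E.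
Proof. exact: (@fubini_tonelli _ _ _ _ _ lam' lam'). Qed.

End tonelli.

Section transition.
Context (R : realType) (dX : measure_display) (X : measurableType dX)
  (lam : {measure set X -> \bar R}) (A : finType) (dd : nat)
  (phi : nat -> X -> A -> 'I_dd -> R) (mu : nat -> X -> 'I_dd -> R)
  (Bmu : R) (d0 : X -> R) (pi : policy R X A).
Hypothesis lam_sf : sigma_finite setT lam.
Hypothesis mdp : lowrank_MDP lam phi mu Bmu d0.
Hypothesis pi_markov : markov_policy pi.

Let mphi h a j : measurable_fun setT (fun x => phi h x a j).
Proof. by case: mdp => -[]. Qed.
Let mmu h j : measurable_fun setT (fun x => mu h x j).
Proof. by case: mdp => -[]. Qed.
Let phi_le1 h x a j : `|phi h x a j| <= 1.
Proof. by case: mdp. Qed.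
Let Ptrans_ge0 h x a x' : 0 <= Ptrans phi mu h x a x'.
Proof. by case: mdp => _ _ _ []. Qed.
Let Ptrans_mass h x a : (\int[lam]_x' (Ptrans phi mu h x a x')%:E = 1)%E.
Proof. by case: mdp => _ _ _ []. Qed.
Let pi_ge0 h x a : 0 <= pi h x a.
Proof. by case: pi_markov. Qed.
Let pi_sum1 h x : \sum_a pi h x a = 1.
Proof. by case: pi_markov. Qed.
Let mpi h a : measurable_fun setT (fun x => pi h x a).
Proof. by case: pi_markov. Qed.

Implicit Types u v : X -> R.

Lemma policy_le1 h x a : pi h x a <= 1.
Proof. by rewrite -(pi_sum1 h x) (bigD1 a) //= lerDl sumr_ge0. Qed.

Lemma measurable_Ptrans n a : measurable_fun setT
  (fun z : X * X => Ptrans phi mu n z.1 a z.2).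
Proof.
apply: measurable_sum => j; apply: measurable_funM.
  exact: measurableT_comp (mphi n a j) measurable_fst.
exact: measurableT_comp (mmu n j) measurable_snd.
Qed.

Lemma Ptrans_le n x a x' : Ptrans phi mu n x a x' <= \sum_j `|mu n x' j|.
Proof.
rewrite (le_trans (ler_norm _)) // (le_trans (ler_norm_sum _ _ _)) // ler_sum // => j _.
by rewrite normrM ler_piMl.
Qed.

Definition Pop_integrand n u x' x := \sum_a Ptrans phi mu n x a x' * pi n x a * u x.

Lemma measurable_Pop_integrand n u x' : measurable_fun setT u ->
  measurable_fun setT (Pop_integrand n u x').
Proof.
move=> mu'; apply: measurable_sum => a; apply: measurable_funM => //.
apply: measurable_funM => //.
exact: measurableT_comp (measurable_Ptrans n a) (pair2_measurable x').
Qed.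

Lemma norm_Pop_integrand_le n u x' x :
  `|Pop_integrand n u x' x| <= Pop_integrand n (fun x => `|u x|) x' x.
Proof.
rewrite (le_trans (ler_norm_sum _ _ _)) // ler_sum // => a _.
by rewrite !normrM (ger0_norm (Ptrans_ge0 _ _ _ _)) (ger0_norm (pi_ge0 _ _ _)).
Qed.

Lemma rintegrable_Pop_integrand n u x' : rintegrable lam u ->
  rintegrable lam (Pop_integrand n u x').
Proof.
move=> iu; apply: (@rintegrable_le _ _ _ _ _
  (fun x => \sum_(a : A) (\sum_j `|mu n x' j|) * `|u x|)).
- by apply: measurable_Pop_integrand; exact: rintegrable_measurable iu.
- move=> x; apply: le_trans (norm_Pop_integrand_le _ _ _ _) _.
  apply: ler_sum => a _; rewrite -mulrA ler_pM ?mulr_ge0 ?Ptrans_le //.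
  by rewrite ler_piMl ?policy_le1.
- by apply: rintegrable_sum => a; apply: rintegrableZ; exact: rintegrable_norm.
Qed.

Definition Pop_coef n u j := \int[lam]_x (\sum_a phi n x a j * pi n x a * u x).

Lemma Pop_lowrank n u : rintegrable lam u ->
  Pop lam phi mu pi n u = lowrank (mu n) (Pop_coef n u).
Proof.
move=> iu; have icoef j : rintegrable lam (fun x => \sum_a phi n x a j * pi n x a * u x).
  apply: (@rintegrable_le _ _ _ _ _ (fun x => \sum_(a : A) `|u x|)).
  - apply: measurable_sum => a; apply: measurable_funM; first exact: measurable_funM.
    exact: rintegrable_measurable iu.
  - move=> x; rewrite (le_trans (ler_norm_sum _ _ _)) // ler_sum // => a _.
    by rewrite !normrM ler_piMl // mulr_ile1 // ger0_norm ?policy_le1.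
  - by apply: rintegrable_sum => a; exact: rintegrable_norm.
apply: funext => x'; rewrite /Pop /lowrank /Pop_coef.
transitivity (\int[lam]_x \sum_j mu n x' j * (\sum_a phi n x a j * pi n x a * u x)).
  apply: eq_Rintegral => x _; rewrite /Ptrans.
  under eq_bigr do rewrite !mulr_suml.
  rewrite exchange_big; apply: eq_bigr => j _; rewrite mulr_sumr.
  by apply: eq_bigr => a _; ring.
rewrite Rintegral_sum; last by move=> j; exact: rintegrableZ (icoef j).
by apply: eq_bigr => j _; rewrite RintegralZl //; exact: icoef.
Qed.

Lemma measurable_Pop n u : rintegrable lam u ->
  measurable_fun setT (Pop lam phi mu pi n u).
Proof. by move=> iu; rewrite Pop_lowrank //; exact: measurable_lowrank. Qed.

Lemma Pop_ge0 n u x' : (forall x, 0 <= u x) -> 0 <= Pop lam phi mu pi n u x'.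
Proof.
by move=> u0; apply: Rintegral_ge0 => x _; apply: sumr_ge0 => a _; rewrite !mulr_ge0.
Qed.

Lemma le_Pop n u v x' : rintegrable lam u -> rintegrable lam v ->
  (forall x, u x <= v x) -> Pop lam phi mu pi n u x' <= Pop lam phi mu pi n v x'.
Proof.
move=> iu iv uv; apply: le_Rintegral => //; try exact: rintegrable_Pop_integrand.
by move=> x _; apply: ler_sum => a _; rewrite ler_wpM2l ?mulr_ge0.
Qed.

Lemma normr_Pop_le n u x' : rintegrable lam u ->
  `|Pop lam phi mu pi n u x'| <= Pop lam phi mu pi n (fun x => `|u x|) x'.
Proof.
move=> iu; apply: le_trans (le_normr_Rintegral measurableT _) _.
  exact: rintegrable_Pop_integrand.
apply: le_Rintegral => //.
- exact/rintegrable_norm/rintegrable_Pop_integrand.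
- exact/rintegrable_Pop_integrand/rintegrable_norm.
- by move=> x _; exact: norm_Pop_integrand_le.
Qed.

Lemma PopB n u v : rintegrable lam u -> rintegrable lam v ->
  Pop lam phi mu pi n (u \- v) = Pop lam phi mu pi n u \- Pop lam phi mu pi n v.
Proof.
move=> iu iv; apply: funext => x' /=; rewrite /Pop -RintegralB //;
  try exact: rintegrable_Pop_integrand.
by apply: eq_Rintegral => x _; rewrite -sumrB; apply: eq_bigr => a _ /=; ring.
Qed.

Lemma integral_Pop n u : rintegrable lam u -> (forall x, 0 <= u x) ->
  (\int[lam]_x' (Pop lam phi mu pi n u x')%:E = \int[lam]_x (u x)%:E)%E.
Proof.
move=> iu u0; pose K (z : X * X) := (Pop_integrand n u z.2 z.1)%:E.
have mK : measurable_fun setT K.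
  apply/measurable_EFinP; apply: measurable_sum => a; apply: measurable_funM.
    apply: measurable_funM; first exact: measurable_Ptrans.
    exact: measurableT_comp (mpi n a) measurable_fst.
  exact: measurableT_comp (rintegrable_measurable iu) measurable_fst.
transitivity (\int[lam]_x' \int[lam]_x K (x, x'))%E.
  apply: eq_integral => x' _; rewrite /Pop /Rintegral fineK //.
  exact/integrable_fin_num/rintegrable_Pop_integrand.
rewrite -ge0_integral_swap //; last first.
  by move=> z; rewrite lee_fin sumr_ge0 // => a _; rewrite !mulr_ge0.
apply: eq_integral => x _; rewrite /K /=.
under eq_integral do rewrite -sumEFin.
rewrite ge0_integral_sum //; first last.
- by move=> a x' _; rewrite lee_fin !mulr_ge0.
- move=> a; apply/measurable_EFinP; do 2 apply: measurable_funM => //.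
  exact: measurableT_comp (measurable_Ptrans n a) (pair1_measurable x).
transitivity (\sum_a (pi n x a * u x)%:E)%E; last first.
  by rewrite sumEFin -mulr_suml pi_sum1 mul1r.
apply: eq_bigr => a _; under eq_integral do rewrite -mulrA mulrC EFinM.
rewrite ge0_integralZl ?Ptrans_mass ?mule1 ?lee_fin ?mulr_ge0 //.
- apply/measurable_EFinP.
  exact: measurableT_comp (measurable_Ptrans n a) (pair1_measurable x).
- by move=> x' _; rewrite lee_fin.
Qed.

Lemma L1_Pop_le n u : rintegrable lam u ->
  (\int[lam]_x' (`|Pop lam phi mu pi n u x'|)%:E <= \int[lam]_x (`|u x|)%:E)%E.
Proof.
move=> iu; have iu' := rintegrable_norm iu.
rewrite -(integral_Pop n iu' (fun x => normr_ge0 (u x))).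
apply: ge0_le_integral => //.
- by apply/measurable_EFinP/measurableT_comp => //; exact: measurable_Pop.
- exact/measurable_EFinP/measurable_Pop.
- by move=> x' _; rewrite lee_fin normr_Pop_le.
Qed.

Lemma rintegrable_Pop n u : rintegrable lam u -> rintegrable lam (Pop lam phi mu pi n u).
Proof.
move=> iu; apply/integrableP; split; first exact/measurable_EFinP/measurable_Pop.
by apply: le_lt_trans (L1_Pop_le n iu) _; case/integrableP: iu.
Qed.

Lemma L1dist_Pop_le n u v : rintegrable lam u -> rintegrable lam v ->
  (L1dist lam (Pop lam phi mu pi n u) (Pop lam phi mu pi n v) <= L1dist lam u v)%E.
Proof. by move=> iu iv; have := L1_Pop_le n (rintegrableB iu iv); rewrite PopB. Qed.

End transition.

Section barycentric_spanner.
Context (R : realType) (X : Type) (I : finType) (m : nat)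
  (S : I -> X -> R) (s : 'I_m -> I).

(* [bary_spanner] puts its coefficients on first occurrences, where [s] is
   injective. *)
Definition first_occurrence (k : 'I_m) :=
  `[< forall k' : 'I_m, (k' < k)%N -> S (s k') <> S (s k) >].

Lemma bary_spanner_le_first i x : bary_spanner S s ->
  S i x <= \sum_(k | first_occurrence k) `|S (s k) x|.
Proof.
case=> /(_ i) [c [c_bnd c_first ->]] _.
rewrite (le_trans (ler_norm _)) // (le_trans (ler_norm_sum _ _ _)) //.
rewrite [leRHS]big_mkcond /=; apply: ler_sum => k _; case: ifPn => [_|].
  by rewrite normrM ler_piMl // ler_norml.
move=> /asboolPn /existsNP [k' /not_implyP [lt_k'k /contrapT eq_k'k]].
by rewrite (c_first k k' lt_k'k eq_k'k) mul0r normr0.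
Qed.

Lemma sum_first_occurrence_le (f : I -> R) : (forall q, 0 <= f q) ->
  \sum_(k | first_occurrence k) f (s k) <= \sum_(q in [set s k | k : 'I_m]) f q.
Proof.
move=> f0; have s_inj : {in [set k | first_occurrence k]%SET &, injective s}.
  move=> k1 k2; rewrite !inE => /asboolP first1 /asboolP first2 eq_s.
  case: (ltngtP k1 k2) => [lt12|lt21|/val_inj //].
    by have := first2 k1 lt12; rewrite eq_s.
  by have := first1 k2 lt21; rewrite eq_s.
have -> : \sum_(k | first_occurrence k) f (s k) =
    \sum_(q in s @: [set k | first_occurrence k]%SET) f q.
  by rewrite big_imset //; apply: eq_bigl => k; rewrite inE.
rewrite [leLHS]big_mkcond [leRHS]big_mkcond.
apply: ler_sum => q _; case: ifPn => [/imsetP[k _ ->]|_].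
  by rewrite imset_f.
by case: ifP.
Qed.

Lemma bary_spanner_le i x (f : I -> R) : bary_spanner S s -> (forall q, 0 <= f q) ->
  S i x <= \sum_(q in [set s k | k : 'I_m]) f q + \sum_k `|S (s k) x - f (s k)|.
Proof.
move=> bS f0; apply: le_trans (bary_spanner_le_first i x bS) _.
apply: (@le_trans _ _ (\sum_(k | first_occurrence k) f (s k) +
   \sum_(k | first_occurrence k) `|S (s k) x - f (s k)|)).
  rewrite -big_split /=; apply: ler_sum => k _.
  rewrite -{1}(subrK (f (s k)) (S (s k) x)) (le_trans (ler_normD _ _)) //.
  by rewrite (ger0_norm (f0 _)) addrC.
apply: lerD; first exact: sum_first_occurrence_le.
by rewrite [leRHS]big_mkcond /= [leLHS]big_mkcond; apply: ler_sum => k _; case: ifP.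
Qed.

End barycentric_spanner.

Section clipped_occupancy.
Context (R : realType) (dX : measure_display) (X : measurableType dX)
  (lam : {measure set X -> \bar R}) (A : finType) (I : finType) (dd : nat)
  (phi : nat -> X -> A -> 'I_dd -> R) (mu : nat -> X -> 'I_dd -> R)
  (Bmu : R) (d0 : X -> R) (pol : I -> policy R X A) (expl : nat -> 'I_dd -> I).
Hypothesis lam_sf : sigma_finite setT lam.
Hypothesis mdp : lowrank_MDP lam phi mu Bmu d0.
Hypothesis pol_markov : forall q, markov_policy (pol q).
Hypothesis A_gt0 : (0 < #|A|)%N.

Local Notation dpi q := (occ lam phi mu d0 (pol q)).
Local Notation dbarpi q := (dbar lam phi mu d0 pol expl (pol q)).
Local Notation dD := (dData lam phi mu d0 pol expl).
Local Notation P q := (Pop lam phi mu (pol q)).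

Definition dclip q n x := Num.min (dbarpi q n x) (dd%:R * dD n x).

Let d0_density : is_density lam d0.
Proof. by case: mdp. Qed.

Let rintegrable_d0 : rintegrable lam d0.
Proof.
case: d0_density => md0 [d0_ge0 d0_mass]; apply/integrableP; split.
  exact/measurable_EFinP.
by under eq_integral do rewrite /= ger0_norm //; rewrite d0_mass ltry.
Qed.

(* The data policy is uniform, so [K pi^D_h = 1] and action clipping is vacuous. *)
Lemma clip_pol_id q : clip_pol (pol q) = pol q.
Proof.
apply/funext => h; apply/funext => x; apply/funext => a.
by rewrite /clip_pol mulfV ?pnatr_eq0 -?lt0n // min_l // policy_le1.
Qed.

Lemma dbar_succ q n : dbarpi q n.+1 = P q n (dclip q n).
Proof. by rewrite /= clip_pol_id. Qed.

Lemma occ_ge0 q n x : 0 <= dpi q n x.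
Proof.
elim: n x => [|n IHn] x /=; first by case: d0_density => _ [].
exact: Pop_ge0 mdp (pol_markov q) _ _ _ IHn.
Qed.

Lemma rintegrable_occ q n : rintegrable lam (dpi q n).
Proof.
elim: n => [|n IHn] //=.
exact: rintegrable_Pop lam_sf mdp (pol_markov q) _ _ IHn.
Qed.

Lemma dData_ge0 n x : 0 <= dD n x.
Proof. by rewrite mulr_ge0 ?invr_ge0 // sumr_ge0 // => q _; exact: occ_ge0. Qed.

Lemma rintegrable_dData n : rintegrable lam (dD n).
Proof. by apply/rintegrableZ/rintegrable_sum => q; exact: rintegrable_occ. Qed.

Lemma dbar_ge0 q n x : 0 <= dbarpi q n x.
Proof.
elim: n x => [|n IHn] x; first by case: d0_density => _ [].
rewrite dbar_succ; apply: (Pop_ge0 mdp (pol_markov q)) => y.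
by rewrite le_min IHn mulr_ge0 ?dData_ge0.
Qed.

Lemma rintegrable_dbar q n : rintegrable lam (dbarpi q n).
Proof.
elim: n => [|n IHn] //; rewrite dbar_succ.
apply: (rintegrable_Pop lam_sf mdp (pol_markov q)); apply: rintegrable_min => //.
exact/rintegrableZ/rintegrable_dData.
Qed.

Lemma rintegrable_dclip q n : rintegrable lam (dclip q n).
Proof.
by apply: rintegrable_min; [exact: rintegrable_dbar | exact/rintegrableZ/rintegrable_dData].
Qed.

Lemma dclip_le_dbar q n x : dclip q n x <= dbarpi q n x.
Proof. by rewrite /dclip ge_min lexx. Qed.

Lemma dbar_le_occ q n x : dbarpi q n x <= dpi q n x.
Proof.
elim: n x => [|n IHn] x //; rewrite dbar_succ /=.
apply: (le_Pop mdp (pol_markov q)); rewrite ?rintegrable_dclip ?rintegrable_occ //.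
by move=> y; rewrite (le_trans (dclip_le_dbar _ _ _)).
Qed.

Lemma sum_occ_expl_le n x : \sum_(q in expl_set expl n) dpi q n x <= dd%:R * dD n x.
Proof.
rewrite /dData; set E := expl_set expl n.
have [/eqP|E_gt0] := posnP #|E|.
  by rewrite cards_eq0 => /eqP ->; rewrite big_set0 !mulr0.
have E_le : (#|E| <= dd)%N by rewrite -[X in (_ <= X)%N]card_ord leq_imset_card.
rewrite mulrA -[leLHS]mul1r ler_wpM2r //.
  by rewrite sumr_ge0 // => q _; exact: occ_ge0.
by rewrite ler_pdivlMr ?ltr0n // mul1r ler_nat.
Qed.


Lemma dbar_sub_dclip_le (t : I -> X -> R) p n x : bary_spanner t (expl n) ->
  dbarpi p n x - dclip p n x <=
  `|dbarpi p n x - t p x| + \sum_k `|t (expl n k) x - dbarpi (expl n k) n x|.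
Proof.
move=> bt; rewrite /dclip; have [_|lt_dD] := leP (dbarpi p n x) (dd%:R * dD n x).
  by rewrite subrr addr_ge0 ?sumr_ge0.
have t_le : t p x <= \sum_(q in expl_set expl n) dbarpi q n x +
    \sum_k `|t (expl n k) x - dbarpi (expl n k) n x|.
  exact: bary_spanner_le bt (fun q => dbar_ge0 q n x).
have sum_le : \sum_(q in expl_set expl n) dbarpi q n x <= dd%:R * dD n x.
  apply: le_trans (sum_occ_expl_le n x); apply: ler_sum => q _; exact: dbar_le_occ.
have := ler_norm (dbarpi p n x - t p x); lra.
Qed.

Lemma integral_dbar_sub_dclip_le (t : I -> X -> R) p n :
  bary_spanner t (expl n) -> (forall q, measurable_fun setT (t q)) ->
  (\int[lam]_x (dbarpi p n x - dclip p n x)%:E <=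
   L1dist lam (dbarpi p n) (t p) +
   \sum_k L1dist lam (t (expl n k)) (dbarpi (expl n k) n))%E.
Proof.
move=> bt mt; have mdbar q := rintegrable_measurable (rintegrable_dbar q n).
have merr k := measurable_L1_integrand (mt (expl n k)) (mdbar (expl n k)).
rewrite /L1dist -(ge0_integral_sum _ measurableT merr) => [|k x _]; last by rewrite lee_fin.
rewrite -ge0_integralD //; first last.
- exact: emeasurable_sum.
- by move=> x _; apply: sume_ge0 => k _; rewrite lee_fin.
- exact: measurable_L1_integrand.
apply: ge0_le_integral => //.
- by move=> x _; rewrite lee_fin subr_ge0 dclip_le_dbar.
- apply/measurable_EFinP/measurable_funB => //.
  exact/rintegrable_measurable/rintegrable_dclip.
- by apply: emeasurable_funD; [exact: measurable_L1_integrand | exact: emeasurable_sum].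
- by move=> x _; rewrite sumEFin -EFinD lee_fin dbar_sub_dclip_le.
Qed.

Lemma L1dist_dbar_occ_succ_le (t : I -> X -> R) (e : R) p n :
  bary_spanner t (expl n) -> (forall q, measurable_fun setT (t q)) ->
  (forall q, L1dist lam (t q) (dbarpi q n) <= e%:E)%E ->
  (L1dist lam (dbarpi p n.+1) (dpi p n.+1) <=
   L1dist lam (dbarpi p n) (dpi p n) + ((dd%:R + 1) * e)%:E)%E.
Proof.
move=> bt mt te; rewrite dbar_succ.
apply: le_trans (L1dist_Pop_le lam_sf mdp (pol_markov p) n
  (rintegrable_dclip p n) (rintegrable_occ p n)) _.
apply: le_trans (L1dist_le_sub lam _ _ _ (dclip_le_dbar p n)) _;
  try exact/rintegrable_measurable/rintegrable_dbar;
  try exact/rintegrable_measurable/rintegrable_dclip;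
  try exact/rintegrable_measurable/rintegrable_occ.
apply: leeD2l; apply: le_trans (integral_dbar_sub_dclip_le p bt mt) _.
rewrite L1distC mulrDl mul1r EFinD [leRHS]addeC; apply: leeD; first exact: te.
apply: le_trans (lee_sum _ (fun k _ => te (expl n k))) _.
by rewrite sumEFin sumr_const card_ord mulr_natl.
Qed.

Context (H nmle nreg : nat) (Dmle Dreg : nat -> seq ((X * A) * X))
  (hatd tild : nat -> I -> X -> R) (hatdD hatdDdag : nat -> X -> R)
  (hatw : nat -> I -> X -> R).
Hypothesis run :
  FORCE_run lam H mu d0 pol nmle nreg Dmle Dreg expl hatd tild hatdD hatdDdag hatw.

Let mmu h j : measurable_fun setT (fun x => mu h x j).
Proof. by case: mdp => -[]. Qed.

Lemma measurable_tild n q : (n < H)%N -> measurable_fun setT (tild n q).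
Proof.
case: run => [[init _] _ _ _ proj]; case: n => [_|n nH].
  by rewrite (init q).2; case: d0_density.
by have [th [-> _]] := proj n q (ltnW nH); exact: measurable_lowrank.
Qed.

Lemma measurable_hatd n q : (n < H)%N -> measurable_fun setT (hatd n q).
Proof.
case: run => [[init _] _ mle reg _]; case: n => [_|n nH].
  by rewrite (init q).1; case: d0_density.
have [[thu [thd [-> _]]] _ ->] := reg n q (ltnW nH).
have [_ [[th [_ _ [mdag _]]] _]] := mle n (ltnW nH).
apply: measurable_funM => //; apply: measurable_funM; first exact: measurable_lowrank.
exact/measurable_funV/measurable_lowrank.
Qed.

Lemma L1dist_tild_dbar_le n q : (n < H)%N ->
  (L1dist lam (tild n q) (dbarpi q n) <=
   L1dist lam (hatd n q) (dbarpi q n) + L1dist lam (hatd n q) (dbarpi q n))%E.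
Proof.
case: run => [[init _] _ _ _ proj]; case: n => [_|n nH].
  by rewrite (init q).2 L1distxx adde_ge0 ?L1dist_ge0.
have [th [eq_t t_opt]] := proj n q (ltnW nH).
apply: (L1dist_proj_le (S := range (lowrank (mu n)))).
- exact: measurable_tild.
- exact: measurable_hatd.
- exact/rintegrable_measurable/rintegrable_dbar.
- by move=> _ [th' _ <-]; rewrite eq_t; exact: t_opt.
- rewrite dbar_succ (Pop_lowrank mdp (pol_markov q)); first exact: imageT.
  exact: rintegrable_dclip.
Qed.

End clipped_occupancy.

Unset Implicit Arguments.
Theorem lemma2 (R : realType) (dX : measure_display) (X : measurableType dX)
  (lam : {measure set X -> \bar R}) (A : finType) (I : finType) (H dd : nat)
  (phi : nat -> X -> A -> 'I_dd -> R) (mu : nat -> X -> 'I_dd -> R)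
  (Bmu : R) (d0 : X -> R) (pol : I -> policy R X A)
  (nmle nreg : nat) (Dmle Dreg : nat -> seq ((X * A) * X))
  (expl : nat -> 'I_dd -> I) (hatd tild : nat -> I -> X -> R)
  (hatdD hatdDdag : nat -> X -> R) (hatw : nat -> I -> X -> R) :
  (0 < dd)%N -> (0 < #|A|)%N ->
  sigma_finite setT lam ->
  lowrank_MDP lam phi mu Bmu d0 ->
  (forall p, markov_policy (pol p)) ->
  FORCE_run lam H mu d0 pol nmle nreg Dmle Dreg expl hatd tild hatdD hatdDdag hatw ->
  forall (h : nat) (p : I), (1 <= h)%N -> (h <= H - 1)%N ->
    (L1dist lam (dbar lam phi mu d0 pol expl (pol p) h) (occ lam phi mu d0 (pol p) h)
     <= L1dist lam (dbar lam phi mu d0 pol expl (pol p) h.-1)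
                   (occ lam phi mu d0 (pol p) h.-1)
        + (4 * dd%:R)%:E *
          \big[maxe/-oo]_(q : I)
             L1dist lam (hatd h.-1 q) (dbar lam phi mu d0 pol expl (pol q) h.-1))%E.
Proof.
move=> dd_gt0 A_gt0 lam_sf mdp pol_markov run [//|n] p _ nH; rewrite [n.+1.-1]/=.
have {}nH : (n < H)%N by rewrite (leq_trans nH) ?leq_subr.
set M := (\big[maxe/-oo]_q _)%E.
have le_M q : (L1dist lam (hatd n q) (dbar lam phi mu d0 pol expl (pol q) n) <= M)%E.
  exact: le_bigmax.
have := le_trans (L1dist_ge0 _ _ _) (le_M p).
case: M le_M => [r | | //] le_M r_ge0; last first.
  rewrite gt0_muley ?lte_fin ?mulr_gt0 ?ltr0n //.
  exact: lee_paddl (L1dist_ge0 _ _ _) (leey _).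
have tild_le q : (L1dist lam (tild n q) (dbar lam phi mu d0 pol expl (pol q) n)
    <= (r + r)%:E)%E.
  rewrite EFinD; apply: le_trans (L1dist_tild_dbar_le lam_sf mdp pol_markov A_gt0 run q nH) _.
  exact: leeD.
have [[_ bary] _ _ _ _] := run.
apply: le_trans (L1dist_dbar_occ_succ_le lam_sf mdp pol_markov A_gt0 p (bary n nH)
  (fun q => measurable_tild mdp run q nH) tild_le) _.
apply: leeD2l; rewrite -EFinM lee_fin.
have dd_ge1 : 1 <= dd%:R :> R by rewrite ler1n.
rewrite lee_fin in r_ge0; nra.
Qed.
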